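(* For every integer $\nu\ge0$ and every positive integer $n$, $g_\nu(n,0)\neq0$.
   Context: Falling factorial: $(x)_m=x(x-1)\cdots(x-m+1)$ for $m\ge1$, $(x)_0=1$, $(x)_m=1/(x)_{-m}$ for $m\le-1$. $$g_\nu(n,k):=\frac{(2\nu-1)\,(2\nu-2)_{\nu-1}^2}{2^{2\nu-2}}\sum_{r=0}^{\nu}(-1)^{\nu+r}\frac{2\nu-2r-1}{(2r)!\,(2\nu-2r)!}(6k+1)^{2r}\big(24n-(6k+1)^2\big)^{\nu-r}.$$ *)

From mathcomp Require Import all_boot all_order all_algebra.
Set Implicit Arguments. Unset Strict Implicit. Unset Printing Implicit Defensive.
Import Order.TTheory GRing.Theory Num.Theory.
Local Open Scope ring_scope.

Definition ffact_nat (x : rat) (m : nat) : rat :=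
  \prod_(i < m) (x - i%:R).

Definition ffact (x : rat) (m : int) : rat :=
  match m with
  | Posz k => ffact_nat x k
  | Negz k => (ffact_nat x k.+1)^-1
  end.

Definition g (nu : nat) (n k : int) : rat :=
  let v : rat := nu%:R in
  let a : rat := (6 * k + 1)%:~R in
  let N : rat := n%:~R in
  ((2 * v - 1) * (ffact (2 * v - 2) (nu%:Z - 1)) ^+ 2 / (2 : rat) ^ (2 * nu%:Z - 2))
  * \sum_(r < nu.+1)
      (-1) ^+ (nu + r)%N * (2 * v - 2 * r%:R - 1)
      / (((2 * r)`!)%N%:R * ((2 * nu - 2 * r)`!)%N%:R)
      * a ^+ (2 * r)%N * (24 * N - a ^+ 2) ^+ (nu - r)%N.

(* At k = 0 we have 6k + 1 = 1, so after multiplying by (2ν)! the sum in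
   g_ν(n, 0) becomes an integer polynomial in m = 24n - 1 whose constant term
   (the summand r = ν) is -1.  It is therefore congruent to -1 modulo m and
   cannot vanish, as m ≥ 23.  The prefactor is nonzero since 2ν - 1 is odd and
   no factor of the falling factorial (2ν - 2)_(ν - 1) vanishes. *)
From mathcomp Require Import all_boot all_order all_algebra.
From mathcomp Require Import zify ring.
Set Implicit Arguments. Unset Strict Implicit. Unset Printing Implicit Defensive.
Import Order.TTheory GRing.Theory Num.Theory.
Local Open Scope ring_scope.

Lemma ffact_nat_neq0 (x : rat) (m : nat) :
  (forall i : nat, (i < m)%N -> x != i%:R) -> ffact_nat x m != 0.
Proof. by move=> xP; apply/prodf_neq0 => i _; rewrite subr_eq0 xP. Qed.

Lemma ffact_neq0 (x : rat) (m : int) :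
  (forall i : nat, (i < `|m|)%N -> x != i%:R) -> ffact x m != 0.
Proof. by case: m => k xP; rewrite /ffact ?invr_eq0 ffact_nat_neq0. Qed.

(* (2ν)! times the sum in g_ν(n, 0), as a polynomial in x = 24n - 1. *)
Definition gnum (R : comPzRingType) (nu : nat) (x : R) : R :=
  \sum_(r < nu.+1) (-1) ^+ (nu + r) * (2 * nu%:R - 2 * r%:R - 1)
                   * 'C(2 * nu, 2 * r)%:R * x ^+ (nu - r).

Lemma rmorph_gnum (R S : comPzRingType) (f : {rmorphism R -> S}) nu (x : R) :
  f (gnum nu x) = gnum nu (f x).
Proof.
rewrite rmorph_sum; apply: eq_bigr => r _.
by rewrite !rmorphM !rmorphXn !rmorphB !rmorphM rmorphN !rmorph1 !rmorph_nat.
Qed.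

Lemma gnum_modE (R : comPzRingType) nu (x : R) :
  {q : R | gnum nu x = x * q - 1}.
Proof.
exists (\sum_(r < nu) (-1) ^+ (nu + r) * (2 * nu%:R - 2 * r%:R - 1)
                      * 'C(2 * nu, 2 * r)%:R * x ^+ (nu - r).-1).
rewrite /gnum big_ord_recr /= subnn expr0 binn addnn -mul2n exprM sqrrN expr1n.
rewrite subrr sub0r mulr_sumr; congr (_ + _); last by rewrite expr1n mul1r !mulr1.
apply: eq_bigr => r _; rewrite -(prednK (_ : 0 < nu - r)%N) ?subn_gt0 //.
by rewrite exprS /= mulrCA.
Qed.

Lemma fact_mul_gsum (R : numFieldType) nu (x : R) :
  (2 * nu)`!%:R * \sum_(r < nu.+1) (-1) ^+ (nu + r) * (2 * nu%:R - 2 * r%:R - 1)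
      / ((2 * r)`!%:R * (2 * nu - 2 * r)`!%:R) * x ^+ (nu - r)
  = gnum nu x.
Proof.
rewrite mulr_sumr; apply: eq_bigr => r _.
have le2r : (2 * r <= 2 * nu)%N by rewrite leq_mul2l -ltnS ltn_ord orbT.
rewrite -(bin_fact le2r) !natrM.
have fact_neq0 k : (k`!%:R : R) != 0 by rewrite pnatr_eq0 -lt0n fact_gt0.
by field; rewrite !fact_neq0.
Qed.

Lemma g_prefactor_neq0 nu :
  (2 * nu%:R - 1) * ffact (2 * nu%:R - 2) (nu%:Z - 1) ^+ 2
    / (2 : rat) ^ (2 * nu%:Z - 2) != 0.
Proof.
rewrite mulf_neq0 ?invr_neq0 ?expfz_neq0 // mulf_neq0 ?expf_neq0 //.
  by rewrite subr_eq0 -natrM pnatr_eq1; lia.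
apply: ffact_neq0 => i lti; apply/eqP => /(congr1 (fun y : rat => y + 2)).
rewrite subrK -natrD -natrM => /eqP; rewrite eqr_nat; lia.
Qed.

Theorem mainTheorem5 (nu : nat) (n : int) : 0 < n -> g nu n 0 != 0.
Proof.
move=> n_gt0; rewrite /g mulr0 add0r mulr1z.
rewrite mulf_eq0 negb_or g_prefactor_neq0 /=.
under eq_bigr do rewrite expr1n mulr1 expr1n.
have [fact_neq0 m_def] : ((2 * nu)`!%:R : rat) != 0
                         /\ 24 * n%:~R - 1 = (24 * n - 1)%:~R :> rat.
  by rewrite pnatr_eq0 -lt0n fact_gt0 rmorphB rmorphM.
rewrite m_def -(mulrI_eq0 _ (mulfI fact_neq0)) fact_mul_gsum -rmorph_gnum.
have [q ->] := gnum_modE nu (24 * n - 1).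
rewrite intr_eq0 subr_eq0; apply/negP => /eqP m_mul_q.
have : 24 * n - 1 \is a GRing.unit by apply/unitrPr; exists q.
lia.
Qed.
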